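(* Let $G$ be a group endowed with a bi-invariant metric $\partial$. The following are equivalent: (i) $(G,\partial)$ has the metric Bergman property; (ii) whenever $d$ is a left-invariant pseudo-metric on $G$ such that for some $\varepsilon>0$ the set $\{g\colon\partial(g,1)<\varepsilon\}$ is $d$-bounded, $d$ is bounded on $G$; (iii) whenever $G$ acts by isometries on a metric space $(X,d)$ in such a way that for every $x\in X$ there exists $\varepsilon>0$ with $\partial(g,1)<\varepsilon\Rightarrow d(x,gx)\le1/\varepsilon$, all $G$-orbits are bounded in $(X,d)$.
   Context: For $W\subseteq G$, $(W)_\varepsilon=\{g\colon\partial(g,W)<\varepsilon\}$ and $(W)_\varepsilon^k$ means $\big((W)_\varepsilon\big)^k$. $(G,\partial)$ has the metric Bergman property if whenever $W_0\subseteq W_1\subseteq\cdots$ is an increasing sequence of subsets of $G$ with $\bigcup_nW_n=G$, then for every $\varepsilon>0$ there exist $n$ and $k$ with $(W_n)_\varepsilon^k=G$. *)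

From Stdlib Require Import Reals List.
Open Scope R_scope.

Section Defs.
Context {G : Type}.
Variables (mul : G -> G -> G) (inv : G -> G) (one : G).

Definition is_group : Prop :=
  (forall x y z, mul x (mul y z) = mul (mul x y) z) /\
  (forall x, mul one x = x) /\ (forall x, mul x one = x) /\
  (forall x, mul (inv x) x = one) /\ (forall x, mul x (inv x) = one).

Fixpoint list_prod (l : list G) : G :=
  match l with nil => one | cons a l' => mul a (list_prod l') end.

Definition set_pow (A : G -> Prop) (k : nat) : G -> Prop :=
  fun g => exists l : list G, length l = k /\ Forall A l /\ list_prod l = g.

End Defs.

Definition is_pseudometric {X : Type} (d : X -> X -> R) : Prop :=
  (forall x, d x x = 0) /\ (forall x y, d x y = d y x) /\
  (forall x y z, d x z <= d x y + d y z).

Definition is_metric {X : Type} (d : X -> X -> R) : Prop :=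
  is_pseudometric d /\ (forall x y, d x y = 0 -> x = y).

(* nonnegativity follows from the axioms above *)

Definition bi_invariant {G : Type} (mul : G -> G -> G) (d : G -> G -> R) : Prop :=
  forall g x y, d (mul g x) (mul g y) = d x y /\ d (mul x g) (mul y g) = d x y.

Definition left_invariant {G : Type} (mul : G -> G -> G) (d : G -> G -> R) : Prop :=
  forall g x y, d (mul g x) (mul g y) = d x y.

(* (W)_eps = { g | dist(g, W) < eps }; dist(g,W) = inf_{w in W} d(g,w) < eps
   iff some w in W has d(g,w) < eps *)
Definition eps_nbhd {G : Type} (d : G -> G -> R) (W : G -> Prop) (eps : R) : G -> Prop :=
  fun g => exists w, W w /\ d g w < eps.

Definition bounded_set {X : Type} (d : X -> X -> R) (S : X -> Prop) : Prop :=
  exists M : R, forall x y, S x -> S y -> d x y <= M.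

Definition metric_Bergman {G : Type} (mul : G -> G -> G) (one : G)
  (d : G -> G -> R) : Prop :=
  forall W : nat -> G -> Prop,
    (forall n g, W n g -> W (S n) g) ->
    (forall g, exists n, W n g) ->
    forall eps : R, 0 < eps ->
      exists n k : nat, forall g, set_pow mul one (eps_nbhd d (W n) eps) k g.

Definition isometric_action {G X : Type} (mul : G -> G -> G) (one : G)
  (act : G -> X -> X) (dX : X -> X -> R) : Prop :=
  (forall x, act one x = x) /\
  (forall g h x, act (mul g h) x = act g (act h x)) /\
  (forall g x y, dX (act g x) (act g y) = dX x y).

(* Given an exhausting increasing sequence (W_n) and eps > 0, take the
   symmetric pieces V_n = W_n ∩ W_n^-1 and U_c = (V_c)_eps, and let l(g) be
   the least c with g ∈ U_c^c.  This is a length function (symmetric,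
   subadditive) which is at most 1 on the eps-ball, and it is bounded exactly
   when some (W_n)_eps^k is all of G.  So the Bergman property says that every
   length function bounded on a ball is bounded.  Such a length gives the
   left-invariant metric l(x^-1 y) + ∂(x, y), on which G acts by left
   translation with the local condition of (iii); conversely an orbit map of an
   action as in (iii) pulls back to a pseudo-metric as in (ii), and a
   left-invariant pseudo-metric bounded on a ball grows at most linearly along
   the products (W_n)_eps^k. *)
From Pilot Require Import Defs.
From Stdlib Require Import Reals List Wf_nat Lra Lia Classical ClassicalEpsilon.
Open Scope R_scope.

Lemma pseudometric_nonneg {X : Type} (d : X -> X -> R) :
  is_pseudometric d -> forall x y, 0 <= d x y.
Proof.
  intros (d_refl & d_sym & d_tri) x y.
  pose proof (d_tri x y x) as H. rewrite d_refl, (d_sym y x) in H. lra.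
Qed.

Lemma bounded_by_nat {X : Type} (l : X -> nat) (M : R) :
  (forall x, INR (l x) <= M) -> exists N, forall x, (l x <= N)%nat.
Proof.
  intros H. destruct (INR_unbounded M) as [N HN]. exists N. intros x.
  apply Nat.lt_le_incl, INR_lt. specialize (H x). lra.
Qed.

Section Group.
Context {G : Type} (mul : G -> G -> G) (inv : G -> G) (one : G).
Hypothesis Hg : is_group mul inv one.

Local Notation lprod := (Defs.list_prod mul one).
Local Notation pow A k := (set_pow mul one A k).

Lemma mulA x y z : mul x (mul y z) = mul (mul x y) z.  Proof. apply Hg. Qed.
Lemma mul1g x : mul one x = x.                         Proof. apply Hg. Qed.
Lemma mulg1 x : mul x one = x.                         Proof. apply Hg. Qed.
Lemma mulVg x : mul (inv x) x = one.                   Proof. apply Hg. Qed.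
Lemma mulgV x : mul x (inv x) = one.                   Proof. apply Hg. Qed.

Lemma invgK x : inv (inv x) = x.
Proof. rewrite <- (mul1g (inv (inv x))), <- (mulgV x), <- mulA, mulgV, mulg1. reflexivity. Qed.

Lemma invMg x y : inv (mul x y) = mul (inv y) (inv x).
Proof.
  assert (H : mul (mul (inv y) (inv x)) (mul x y) = one).
  { rewrite <- mulA, (mulA (inv x)), mulVg, mul1g, mulVg. reflexivity. }
  rewrite <- (mul1g (inv (mul x y))), <- H, <- mulA, mulgV, mulg1. reflexivity.
Qed.

Lemma invg1 : inv one = one.
Proof. rewrite <- (mulg1 (inv one)). apply mulVg. Qed.

Lemma list_prod_app l1 l2 : lprod (l1 ++ l2) = mul (lprod l1) (lprod l2).
Proof.
  induction l1 as [|a l IH]; simpl.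
  - now rewrite mul1g.
  - now rewrite IH, mulA.
Qed.

Lemma list_prod_repeat_one n : lprod (repeat one n) = one.
Proof. induction n as [|n IH]; simpl; auto. now rewrite IH, mul1g. Qed.

Lemma list_prod_rev_inv l : lprod (rev (map inv l)) = inv (lprod l).
Proof.
  induction l as [|a l IH]; simpl.
  - now rewrite invg1.
  - now rewrite list_prod_app, IH, invMg; simpl; rewrite mulg1.
Qed.

Lemma set_pow0 (A : G -> Prop) : pow A 0 one.
Proof. now exists nil. Qed.

Lemma set_pow1 (A : G -> Prop) g : A g -> pow A 1 g.
Proof. intros Ag. exists (g :: nil). simpl. rewrite mulg1. auto. Qed.

Lemma set_pow_sub (A B : G -> Prop) k g :
  (forall x, A x -> B x) -> pow A k g -> pow B k g.
Proof.
  intros AB (l & Hlen & HA & Hprod). exists l. repeat split; auto.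
  eapply Forall_impl; eauto.
Qed.

Lemma set_pow_pad (A : G -> Prop) k k' g :
  A one -> (k <= k')%nat -> pow A k g -> pow A k' g.
Proof.
  intros A1 Hkk' (l & Hlen & HA & Hprod).
  exists (l ++ repeat one (k' - k)). repeat split.
  - rewrite length_app, repeat_length. lia.
  - apply Forall_app. split; auto.
    apply Forall_forall. intros x Hx. apply repeat_spec in Hx. now subst.
  - now rewrite list_prod_app, list_prod_repeat_one, mulg1.
Qed.

Lemma set_pow_mul (A : G -> Prop) a b g h :
  pow A a g -> pow A b h -> pow A (a + b) (mul g h).
Proof.
  intros (l & Hlen & HA & Hprod) (l' & Hlen' & HA' & Hprod').
  exists (l ++ l'). repeat split.
  - rewrite length_app. lia.
  - now apply Forall_app.
  - now rewrite list_prod_app, Hprod, Hprod'.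
Qed.

Lemma set_pow_inv (A : G -> Prop) k g :
  (forall x, A x -> A (inv x)) -> pow A k g -> pow A k (inv g).
Proof.
  intros Ainv (l & Hlen & HA & Hprod). exists (rev (map inv l)). repeat split.
  - now rewrite length_rev, length_map.
  - apply Forall_rev, Forall_map. eapply Forall_impl; eauto.
  - now rewrite list_prod_rev_inv, Hprod.
Qed.

Definition length_function (l : G -> nat) : Prop :=
  l one = 0%nat /\ (forall g, l (inv g) = l g) /\
  (forall g h, (l (mul g h) <= l g + l h)%nat).

Definition length_dist (l : G -> nat) (x y : G) : R := INR (l (mul (inv x) y)).

Section LengthDist.
Variable l : G -> nat.
Hypothesis Hl : length_function l.

Lemma length_dist_pseudometric : is_pseudometric (length_dist l).
Proof.
  destruct Hl as (l1 & l_inv & l_mul). unfold length_dist. split; [|split].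
  - intros x. now rewrite mulVg, l1.
  - intros x y. now rewrite <- l_inv, invMg, invgK.
  - intros x y z. rewrite <- plus_INR. apply le_INR.
    replace (mul (inv x) z) with (mul (mul (inv x) y) (mul (inv y) z)); auto.
    now rewrite <- mulA, (mulA y), mulgV, mul1g.
Qed.

Lemma length_dist_left_invariant : left_invariant mul (length_dist l).
Proof.
  intros g x y. unfold length_dist.
  now rewrite invMg, <- mulA, (mulA (inv g)), mulVg, mul1g.
Qed.

End LengthDist.

Section WordLength.
Variable U : nat -> G -> Prop.
Hypotheses (U_one : forall c, U c one)
           (U_mono : forall a b g, (a <= b)%nat -> U a g -> U b g)
           (U_inv : forall c g, U c g -> U c (inv g))
           (U_exhaust : forall g, exists c, U c g).

Local Notation ball c := (pow (U c) c).

Definition word_length (g : G) : nat :=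
  epsilon (inhabits 0%nat) (fun c => ball c g /\ forall k, ball k g -> (c <= k)%nat).

Lemma ball_mono a b g : (a <= b)%nat -> ball a g -> ball b g.
Proof.
  intros Hab Hball. apply (set_pow_pad _ a); auto.
  apply (set_pow_sub (U a)); auto. intros x. now apply U_mono.
Qed.

Lemma ball_exhaust g : exists c, ball c g.
Proof.
  destruct (U_exhaust g) as [c Hc]. exists (S c).
  apply (set_pow_pad _ 1); auto; [lia|]. apply set_pow1. apply (U_mono c); auto.
Qed.

Lemma word_length_spec g :
  ball (word_length g) g /\ forall k, ball k g -> (word_length g <= k)%nat.
Proof.
  unfold word_length. apply epsilon_spec.
  destruct (dec_inh_nat_subset_has_unique_least_element (fun c => ball c g)
              (fun c => classic _) (ball_exhaust g)) as [m [[Hm Hmin] _]].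
  eauto.
Qed.

Lemma word_length_ball g : ball (word_length g) g.
Proof. apply word_length_spec. Qed.

Lemma word_length_le g k : ball k g -> (word_length g <= k)%nat.
Proof. apply word_length_spec. Qed.

Lemma word_length_is_length : length_function word_length.
Proof.
  split; [|split].
  - pose proof (word_length_le one 0 (set_pow0 _)). lia.
  - assert (Hle : forall g, (word_length (inv g) <= word_length g)%nat).
    { intros g. apply word_length_le, set_pow_inv; [apply U_inv | apply word_length_ball]. }
    intros g. apply Nat.le_antisymm; auto.
    specialize (Hle (inv g)). now rewrite invgK in Hle.
  - intros g h. apply word_length_le, set_pow_mul.
    + apply (set_pow_sub (U (word_length g))); [intros x; apply U_mono; lia|].
      apply word_length_ball.
    + apply (set_pow_sub (U (word_length h))); [intros x; apply U_mono; lia|].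
      apply word_length_ball.
Qed.

End WordLength.

Lemma dist_mul_one (d : G -> G -> R) :
  is_pseudometric d -> left_invariant mul d ->
  forall a b, d (mul a b) one <= d a one + d b one.
Proof.
  intros (_ & _ & d_tri) d_li a b.
  rewrite <- (d_li a b one), mulg1. pose proof (d_tri (mul a b) a one). lra.
Qed.

Lemma dist_set_pow_one (d : G -> G -> R) (A : G -> Prop) (r : R) k g :
  is_pseudometric d -> left_invariant mul d ->
  (forall a, A a -> d a one <= r) -> pow A k g -> d g one <= INR k * r.
Proof.
  intros Hpm Hli HA (l & <- & Hl & <-).
  induction Hl as [|a l Ha Hl IH]; simpl Defs.list_prod; simpl length.
  - destruct Hpm as (d_refl & _). rewrite d_refl. simpl. lra.
  - pose proof (dist_mul_one d Hpm Hli a (lprod l)). pose proof (HA a Ha).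
    rewrite S_INR. lra.
Qed.

Section BiInvariant.
Variable dG : G -> G -> R.
Hypotheses (Hm : is_metric dG) (Hbi : bi_invariant mul dG).

Lemma dist_refl x : dG x x = 0.
Proof. apply Hm. Qed.

Lemma dist_sym x y : dG x y = dG y x.
Proof. apply Hm. Qed.

Lemma dist_inv g v : dG (inv g) (inv v) = dG g v.
Proof.
  rewrite <- (proj1 (Hbi v (inv g) (inv v))), <- (proj2 (Hbi g (mul v (inv g)) (mul v (inv v)))).
  rewrite <- mulA, mulVg, mulg1, mulgV, mul1g. apply dist_sym.
Qed.

Lemma dist_conj_one x g : dG (mul (inv x) (mul g x)) one = dG g one.
Proof.
  rewrite <- (mulVg x) at 1. rewrite (proj1 (Hbi (inv x) (mul g x) x)).
  rewrite <- (mul1g x) at 2. apply (proj2 (Hbi x g one)).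
Qed.

Lemma dist_left_translate_one x g : dG x (mul g x) = dG g one.
Proof. rewrite <- (mul1g x) at 1. rewrite (proj2 (Hbi x one g)). apply dist_sym. Qed.

Lemma Bergman_of_ball_bounded_lengths :
  (forall eps, 0 < eps -> forall l, length_function l ->
     (forall g, dG g one < eps -> (l g <= 1)%nat) -> exists N, forall g, (l g <= N)%nat) ->
  metric_Bergman mul one dG.
Proof.
  intros Hlen W W_succ W_exhaust eps Heps.
  assert (W_mono : forall n m g, (n <= m)%nat -> W n g -> W m g).
  { intros n m g Hnm. induction Hnm; auto. }
  destruct (W_exhaust one) as [m0 Hm0].
  (* Shifting the index by m0 puts 1 in every piece, which padding of products needs. *)
  set (U := fun c => eps_nbhd dG (fun v => W (c + m0)%nat v /\ W (c + m0)%nat (inv v)) eps).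
  assert (U_one : forall c, U c one).
  { intros c. exists one. rewrite invg1, dist_refl.
    split; [split; apply (W_mono m0); auto; lia | lra]. }
  assert (U_mono : forall a b g, (a <= b)%nat -> U a g -> U b g).
  { intros a b g Hab (v & [Wv Wv'] & Hv). exists v.
    split; [split; apply (W_mono (a + m0)%nat); auto; lia | auto]. }
  assert (U_inv : forall c g, U c g -> U c (inv g)).
  { intros c g (v & [Wv Wv'] & Hv). exists (inv v). rewrite invgK, dist_inv. auto. }
  assert (U_exhaust : forall g, exists c, U c g).
  { intros g. destruct (W_exhaust g) as [n Hn], (W_exhaust (inv g)) as [n' Hn'].
    exists (n + n')%nat, g. rewrite dist_refl.
    split; [split; [apply (W_mono n) | apply (W_mono n')]; auto; lia | lra]. }
  destruct (Hlen eps Heps (word_length U)) as [N HN].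
  - now apply word_length_is_length.
  - intros g Hge. apply word_length_le; auto. apply set_pow1. exists one. split; auto.
    split; apply (W_mono m0); try rewrite invg1; auto; lia.
  - exists (N + m0)%nat, N. intros g.
    apply (set_pow_sub (U N)); [intros x (v & [Wv _] & Hv); now exists v|].
    apply (ball_mono U U_one U_mono (word_length U g)); auto. now apply word_length_ball.
Qed.

Lemma Bergman_bounded_pseudometric :
  metric_Bergman mul one dG ->
  forall d : G -> G -> R, is_pseudometric d -> left_invariant mul d ->
    (exists eps : R, 0 < eps /\ bounded_set d (fun g => dG g one < eps)) ->
    bounded_set d (fun _ => True).
Proof.
  intros HB d Hpm Hli (eps & Heps & M & HM).
  pose proof Hpm as (d_refl & d_sym & d_tri).
  destruct (HB (fun n g => d g one <= INR n)) with (eps := eps) as (n & k & Hk); auto.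
  - intros n g H. rewrite S_INR. lra.
  - intros g. destruct (INR_unbounded (d g one)) as [n Hn]. exists n. lra.
  - assert (Hnbhd : forall a, eps_nbhd dG (fun g => d g one <= INR n) eps a ->
                      d a one <= M + INR n).
    { intros a (w & Hw & Haw).
      assert (d a w <= M).
      { rewrite <- (Hli (inv w) a w), mulVg. apply HM.
        - rewrite <- (mulVg w), (proj1 (Hbi (inv w) a w)). auto.
        - rewrite dist_refl. auto. }
      specialize (d_tri a w one). lra. }
    exists (2 * (INR k * (M + INR n))). intros x y _ _.
    pose proof (dist_set_pow_one d _ _ k x Hpm Hli Hnbhd (Hk x)).
    pose proof (dist_set_pow_one d _ _ k y Hpm Hli Hnbhd (Hk y)).
    specialize (d_tri x one y). rewrite (d_sym one y) in d_tri. lra.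
Qed.

Lemma ball_bounded_length_of_bounded_orbits :
  (forall (X : Type) (dX : X -> X -> R) (act : G -> X -> X),
     is_metric dX -> isometric_action mul one act dX ->
     (forall x : X, exists eps : R, 0 < eps /\
        forall g, dG g one < eps -> dX x (act g x) <= 1 / eps) ->
     forall x : X, bounded_set dX (fun y => exists g, y = act g x)) ->
  forall eps, 0 < eps -> forall l, length_function l ->
    (forall g, dG g one < eps -> (l g <= 1)%nat) -> exists N, forall g, (l g <= N)%nat.
Proof.
  intros Horb eps Heps l Hl Hball.
  pose proof (length_dist_pseudometric l Hl) as (P_refl & P_sym & P_tri).
  pose proof Hm as ((d_refl & d_sym & d_tri) & d_sep).
  set (rho := fun x y => length_dist l x y + dG x y).
  assert (rho_metric : is_metric rho).
  { unfold rho. split; [split; [|split]|].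
    - intros x. rewrite P_refl, d_refl. lra.
    - intros x y. now rewrite P_sym, d_sym.
    - intros x y z. pose proof (P_tri x y z). pose proof (d_tri x y z). lra.
    - intros x y Hxy. apply d_sep.
      pose proof (pos_INR (l (mul (inv x) y))). pose proof (pseudometric_nonneg dG (proj1 Hm) x y).
      unfold length_dist in Hxy. lra. }
  assert (left_action : isometric_action mul one mul rho).
  { split; [|split]; [exact mul1g | intros; symmetry; apply mulA |].
    intros g x y. unfold rho. rewrite (length_dist_left_invariant l g x y).
    now rewrite (proj1 (Hbi g x y)). }
  destruct (Horb G rho mul rho_metric left_action) with (x := one) as [M HM].
  (* On the eps-ball rho(x, g x) <= 1 + dG g 1 < 2, hence also e <= 1/2. *)
  - intros x. set (e := Rmin eps (/ 2)).
    assert (He : 0 < e) by (apply Rmin_glb_lt; lra).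
    assert (He_eps : e <= eps) by apply Rmin_l.
    assert (He_half : e <= / 2) by apply Rmin_r.
    assert (Hinv_e : 2 <= 1 / e).
    { unfold Rdiv. rewrite Rmult_1_l, <- (Rinv_inv 2). apply Rinv_le_contravar; lra. }
    exists e. split; auto. intros g Hge. unfold rho, length_dist.
    assert (Hconj : (l (mul (inv x) (mul g x)) <= 1)%nat).
    { apply Hball. rewrite dist_conj_one. lra. }
    apply le_INR in Hconj. simpl in Hconj. rewrite dist_left_translate_one. lra.
  - apply (bounded_by_nat l M). intros g.
    assert (Hg1 : exists h, g = mul h one) by (exists g; now rewrite mulg1).
    assert (H1 : exists h, one = mul h one) by (exists one; now rewrite mulg1).
    specialize (HM one g H1 Hg1). unfold rho, length_dist in HM.
    rewrite invg1, mul1g in HM.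
    pose proof (pseudometric_nonneg dG (proj1 Hm) one g). lra.
Qed.

End BiInvariant.

Lemma bounded_orbits_of_bounded_pseudometrics (dG : G -> G -> R) :
  (forall d : G -> G -> R, is_pseudometric d -> left_invariant mul d ->
     (exists eps : R, 0 < eps /\ bounded_set d (fun g => dG g one < eps)) ->
     bounded_set d (fun _ => True)) ->
  forall (X : Type) (dX : X -> X -> R) (act : G -> X -> X),
    is_metric dX -> isometric_action mul one act dX ->
    (forall x : X, exists eps : R, 0 < eps /\
       forall g, dG g one < eps -> dX x (act g x) <= 1 / eps) ->
    forall x : X, bounded_set dX (fun y => exists g, y = act g x).
Proof.
  intros Hpm X dX act [(D_refl & D_sym & D_tri) _] (_ & act_mul & act_iso) Hloc x.
  destruct (Hpm (fun g h => dX (act g x) (act h x))) as [M HM].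
  - split; [|split]; intros; auto.
  - intros g a b. simpl. rewrite !act_mul. apply act_iso.
  - destruct (Hloc x) as (eps & Heps & He). exists eps. split; auto.
    exists (2 * (1 / eps)). intros a b Ha Hb.
    pose proof (He a Ha). pose proof (He b Hb). pose proof (D_tri (act a x) x (act b x)).
    rewrite (D_sym (act a x) x) in *. lra.
  - exists M. intros y y' [g ->] [h ->]. auto.
Qed.

End Group.

Theorem proposition4p11 (G : Type) (mul : G -> G -> G) (inv : G -> G) (one : G)
  (dG : G -> G -> R) :
  is_group mul inv one -> is_metric dG -> bi_invariant mul dG ->
  (metric_Bergman mul one dG <->
   (forall d : G -> G -> R, is_pseudometric d -> left_invariant mul d ->
      (exists eps : R, 0 < eps /\ bounded_set d (fun g => dG g one < eps)) ->
      bounded_set d (fun _ => True))) /\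
  (metric_Bergman mul one dG <->
   (forall (X : Type) (dX : X -> X -> R) (act : G -> X -> X),
      is_metric dX -> isometric_action mul one act dX ->
      (forall x : X, exists eps : R, 0 < eps /\
         forall g, dG g one < eps -> dX x (act g x) <= 1 / eps) ->
      forall x : X, bounded_set dX (fun y => exists g, y = act g x))).
Proof.
  intros Hg Hm Hbi.
  pose proof (Bergman_bounded_pseudometric mul inv one Hg dG Hm Hbi) as B_ii.
  pose proof (bounded_orbits_of_bounded_pseudometrics mul one dG) as ii_iii.
  pose proof (fun Horb => Bergman_of_ball_bounded_lengths mul inv one Hg dG Hm Hbi
    (ball_bounded_length_of_bounded_orbits mul inv one Hg dG Hm Hbi Horb)) as iii_B.
  split; split; auto.
Qed.
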